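(* Let $n\ge 3$ and let $S\subseteq\mathbb{Z}_n\setminus\{0\}$ with $S=-S$. The circulant graph $\mathrm{Cay}(\mathbb{Z}_n,S)$ is $\mathbb{Z}_n$-distance antimagic if one of the following holds: (a) $n$ is even, $n/2\in S$, and, writing elements of $S$ as integers in $\{1,\ldots,n-1\}$, $S\setminus\{n/2\}$ contains exactly $2s$ even integers and $2t$ odd integers, where both $2(s-t)+1$ and $2(t-s)+1$ are coprime to $n$; (b) $\gcd(|S|,n)=1$. Moreover, if $|S|$ and $n$ are both even, then $\mathrm{Cay}(\mathbb{Z}_n,S)$ is not $\mathbb{Z}_n$-distance antimagic.
   Context: $\mathrm{Cay}(\mathbb{Z}_n,S)$ has vertex set $\mathbb{Z}_n$, with $x,y$ adjacent iff $x-y\in S$ (mod $n$). For a graph $G$ with $n$ vertices, a $\mathbb{Z}_n$-distance antimagic labelling is a bijection $f:V(G)\to\mathbb{Z}_n$ such that the weights $w_f(x)=\sum_{y\in N(x)} f(y)$ (mod $n$, $N(x)$ the open neighbourhood) are pairwise distinct; $G$ is $\mathbb{Z}_n$-distance antimagic if such a labelling exists. *)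

From HB Require Import structures.
From mathcomp Require Import all_boot all_order all_algebra.
Set Implicit Arguments. Unset Strict Implicit. Unset Printing Implicit Defensive.
Import Order.TTheory GRing.Theory Num.Theory.
Local Open Scope ring_scope.

Definition nbhd_weight (V : finType) (R : zmodType) (adj : rel V) (f : V -> R)
  (x : V) : R := \sum_(y | adj x y) f y.

Definition Zn_distance_antimagic (n : nat) (V : finType) (adj : rel V) : Prop :=
  exists f : V -> 'Z_n, bijective f /\ injective (nbhd_weight adj f).

Definition Cay (n : nat) (S : {set 'Z_n}) : rel 'Z_n := fun x y => (x - y) \in S.

From HB Require Import structures.
From mathcomp Require Import all_boot all_order all_algebra.
From mathcomp Require Import zify ring.
Set Implicit Arguments. Unset Strict Implicit. Unset Printing Implicit Defensive.
Import Order.TTheory GRing.Theory Num.Theory.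
Local Open Scope ring_scope.

(* Everything rests on one formula: in Cay(Z_n, S) the weight of x under a
   labelling f is the sum of f (x - a) over a in S.
   (b) With the identity labelling the weight of x is |S| x - sum(S), which is
       injective when |S| is a unit of Z_n.
   (a) For even n, the parity of representatives is a ring morphism Z_n -> Z_2.
       The labelling x |-> (-1)^x x (x read as its representative) is a
       bijection with weight (-1)^x (u x - c), where u = sum_(a in S) (-1)^a.
       If u is a unit it is odd, so the parity of the weight of x determines
       that of x, and then the weight determines x.  Under hypothesis (a),
       u = +-1 + 2s - 2t is a unit.
   Negative part: summing all weights counts every label |S| times, so for a
   labelling with distinct weights T = |S| T, where T = sum of Z_n; for even
   |S| this forces T = 0 (as 2T = 0), whereas T = n/2 when n is even. *)

Section CayleyWeights.
Variables (n : nat) (R : zmodType) (S : {set 'Z_n}).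

Lemma Cay_weightE (f : 'Z_n -> R) (x : 'Z_n) :
  nbhd_weight (Cay S) f x = \sum_(a in S) f (x - a).
Proof.
rewrite /nbhd_weight /Cay (reindex_inj (h := fun a => x - a)); last first.
  by move=> a b /= /(congr1 (fun z => x - z)); rewrite !subKr.
by apply: eq_bigl => a; rewrite subKr.
Qed.

Lemma sum_Cay_weights (f : 'Z_n -> R) :
  \sum_x nbhd_weight (Cay S) f x = (\sum_y f y) *+ #|S|.
Proof.
under eq_bigr do rewrite Cay_weightE.
rewrite exchange_big /= -sumr_const; apply: eq_bigr => a _.
rewrite (reindex_inj (addIr a)) /=.
by under eq_bigr do rewrite addrK.
Qed.

End CayleyWeights.

Lemma unit_Zp_int (m : nat) (z : int) :
  coprime `|z|%N m.+2 -> (z%:~R : 'Z_(m.+2)) \is a GRing.unit.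
Proof.
case: z => k cz; last rewrite NegzE mulrNz unitrN.
all: by rewrite [_ *~ _]/= unitZpE // coprime_sym.
Qed.

Lemma sum_Zp (m : nat) : \sum_(x : 'Z_(m.+2)) x = 'C(m.+2, 2)%:R.
Proof.
rewrite -bin2_sum big_mkord natr_sum; apply: eq_bigr => i _.
by rewrite natr_Zp.
Qed.

Lemma sum_Zp_opp (n : nat) : - \sum_(x : 'Z_n) x = \sum_(x : 'Z_n) x.
Proof. by rewrite [RHS](reindex_inj oppr_inj) sumrN. Qed.

(* C(2k, 2) = k (2k - 1) leaves remainder k modulo 2k. *)
Lemma bin2_double_mod (k : nat) : (0 < k)%N -> ('C(k.*2, 2) %% k.*2)%N = k.
Proof.
case: k => // k _; rewrite bin2 -[(k.+1).*2.-1]/((k.*2).+1) -doubleMl doubleK.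
have -> : (k.+1 * (k.*2).+1 = k * k.+1.*2 + k.+1)%N by rewrite -!addnn; ring.
by rewrite modnMDl modn_small // -addnn; lia.
Qed.

Lemma sum_sign_card (T : finType) (R : pzRingType) (A : {set T}) (q p : pred T) :
  \sum_(a in A | q a) (-1) ^+ p a =
  #|[set a in A | q a && ~~ p a]|%:R - #|[set a in A | q a && p a]|%:R :> R.
Proof.
rewrite (bigID p) /= addrC.
rewrite (eq_big (fun a => a \in [set a in A | q a && ~~ p a]) (fun=> 1)); last 2 first.
- by move=> a; rewrite !inE andbA.
- by move=> a /andP[_ /negbTE ->].
rewrite [X in _ + X](eq_big (fun a => a \in [set a in A | q a && p a]) (fun=> -1)).
- by rewrite sumrN !sumr_const.
- by move=> a; rewrite !inE andbA.
- by move=> a /andP[_ ->].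
Qed.

(* Part (b): when |S| is a unit, the identity labelling has the injective
   weight function x |-> |S| x - sum(S). *)
Lemma antimagic_of_coprime (m : nat) (S : {set 'Z_(m.+2)}) :
  coprime #|S| m.+2 -> Zn_distance_antimagic m.+2 (Cay S).
Proof.
move=> coS; exists id; split; first by exists id.
have unitS : (#|S|%:R : 'Z_(m.+2)) \is a GRing.unit.
  by rewrite unitZpE // coprime_sym.
move=> x y; rewrite !Cay_weightE !sumrB !sumr_const => /addIr.
by rewrite -[x *+ _]mulr_natr -[y *+ _]mulr_natr => /(mulIr unitS).
Qed.

Section EvenModulus.
Variable m : nat.
Hypothesis m_even : ~~ odd m.

(* Since n = m + 2 is even, reduction mod n preserves parity; hence the
   parity of representatives is additive and multiplicative. *)
Lemma odd_valD (x y : 'Z_(m.+2)) : odd (val (x + y)) = odd (val x) (+) odd (val y).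
Proof. by rewrite /= odd_mod ?oddD //= (negbTE m_even). Qed.

Lemma odd_valN (x : 'Z_(m.+2)) : odd (val (- x)) = odd (val x).
Proof. by rewrite /= odd_mod ?oddB ?(ltnW (ltn_ord x)) //= (negbTE m_even). Qed.

Lemma odd_valM (x y : 'Z_(m.+2)) : odd (val (x * y)) = odd (val x) && odd (val y).
Proof. by rewrite /= odd_mod ?oddM //= (negbTE m_even). Qed.

Lemma odd_val_nat (k : nat) : odd (val (k%:R : 'Z_(m.+2))) = odd k.
Proof.
change (odd (nat_of_ord (k%:R : 'Z_(m.+2))) = odd k).
by rewrite val_Zp_nat // odd_mod //= (negbTE m_even).
Qed.

(* Units of Z_n are odd, as u * u^-1 = 1 is odd. *)
Lemma odd_val_unit (u : 'Z_(m.+2)) : u \is a GRing.unit -> odd (val u).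
Proof.
move=> uU; have := odd_val_nat 1; rewrite mulr1n -(mulrV uU) odd_valM.
by case/andP.
Qed.

(* For even n the elements of Z_n sum to n/2, in particular not to 0. *)
Lemma sum_Zp_neq0 : \sum_(x : 'Z_(m.+2)) x != 0.
Proof.
have n_double : m.+2 = (m./2).+1.*2.
  by rewrite doubleS -{1}(odd_double_half m) (negbTE m_even).
apply/eqP; rewrite sum_Zp => /(congr1 val).
change (nat_of_ord ('C(m.+2, 2)%:R : 'Z_(m.+2)) = 0%N -> False).
by rewrite val_Zp_nat // n_double bin2_double_mod.
Qed.

(* Negative part: with |S| even, the total weight of a distance antimagic
   labelling would be both T and |S| T = 0, where T = sum of Z_n. *)
Lemma not_antimagic_even (S : {set 'Z_(m.+2)}) :
  ~~ odd #|S| -> ~ Zn_distance_antimagic m.+2 (Cay S).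
Proof.
move=> S_even [f [f_bij w_inj]].
set T := \sum_(x : 'Z_(m.+2)) x.
have sum_f : \sum_y f y = T by rewrite /T [RHS](reindex_inj (bij_inj f_bij)).
have sum_w : \sum_x nbhd_weight (Cay S) f x = T.
  by rewrite /T [RHS](reindex_inj w_inj).
have T2 : T *+ 2 = 0 by rewrite mulr2n {1}/T -sum_Zp_opp addNr.
have T0 : T = 0.
  rewrite -sum_w sum_Cay_weights sum_f -(odd_double_half #|S|) (negbTE S_even).
  by rewrite add0n -mul2n mulrnA T2 mul0rn.
by move: sum_Zp_neq0; rewrite -/T T0 eqxx.
Qed.

Section SignedLabelling.
Variable S : {set 'Z_(m.+2)}.

Definition parity_sign (x : 'Z_(m.+2)) : 'Z_(m.+2) := (-1) ^+ odd (val x).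
Definition signed_label (x : 'Z_(m.+2)) : 'Z_(m.+2) := parity_sign x * x.

Lemma odd_val_signed (b : bool) (x : 'Z_(m.+2)) :
  odd (val ((-1) ^+ b * x)) = odd (val x).
Proof. by rewrite mulr_sign; case: b; rewrite ?odd_valN. Qed.

(* Changing sign preserves parity, so the labelling is its own inverse. *)
Lemma signed_labelK : involutive signed_label.
Proof. by move=> x; rewrite /signed_label /parity_sign odd_val_signed signrMK. Qed.

Lemma parity_signB (x a : 'Z_(m.+2)) :
  parity_sign (x - a) = parity_sign x * parity_sign a.
Proof. by rewrite /parity_sign odd_valD odd_valN signr_addb. Qed.

Lemma signed_weightE (x : 'Z_(m.+2)) :
  nbhd_weight (Cay S) signed_label x =
  parity_sign x * ((\sum_(a in S) parity_sign a) * x - \sum_(a in S) signed_label a).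
Proof.
rewrite Cay_weightE mulr_suml -sumrB mulr_sumr; apply: eq_bigr => a _.
by rewrite /signed_label parity_signB -mulrA mulrBr.
Qed.

(* If u is a unit it is odd, so the weight of x has parity (x + c) mod 2;
   equal weights thus force equal signs and then, cancelling, x = y. *)
Lemma signed_label_antimagic :
  (\sum_(a in S) parity_sign a) \is a GRing.unit ->
  Zn_distance_antimagic m.+2 (Cay S).
Proof.
set u := \sum_(a in S) _ => uU; pose c := \sum_(a in S) signed_label a.
exists signed_label; split; first exact: (Bijective signed_labelK signed_labelK).
have odd_u := odd_val_unit uU.
have odd_w x :
    odd (val (nbhd_weight (Cay S) signed_label x)) = odd (val x) (+) odd (val c).
  by rewrite signed_weightE odd_val_signed odd_valD odd_valN odd_valM odd_u.
move=> x y wxy; have odd_xy : odd (val x) = odd (val y).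
  by move: (odd_w x) (odd_w y); rewrite wxy => -> /addIb.
move: wxy; rewrite !signed_weightE /parity_sign odd_xy => /(can_inj (signrMK _)).
by move=> /addIr /(mulrI uU).
Qed.

End SignedLabelling.

Local Notation half := (((m.+2)./2)%:R : 'Z_(m.+2)).

(* Under hypothesis (a), u = (-1)^(n/2) + 2s - 2t, which is 2(s-t)+1 or
   -(2(t-s)+1) according to the parity of n/2, a unit in either case. *)
Lemma sign_sum_unit (S : {set 'Z_(m.+2)}) (s t : nat) :
  half \in S ->
  #|[set x in S | (x != half) && ~~ odd (val x)]| = (2 * s)%N ->
  #|[set x in S | (x != half) && odd (val x)]| = (2 * t)%N ->
  coprime `|(2 * (s%:Z - t%:Z) + 1)%R|%N m.+2 ->
  coprime `|(2 * (t%:Z - s%:Z) + 1)%R|%N m.+2 ->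
  (\sum_(a in S) parity_sign a) \is a GRing.unit.
Proof.
move=> hS cE cO c1 c2.
rewrite (bigD1 half hS) /= /parity_sign sum_sign_card /= cE cO.
case: (odd (val half)).
- have -> : (-1) ^+ true + ((2 * s)%N%:R - (2 * t)%N%:R) =
            - (2 * (t%:Z - s%:Z) + 1)%:~R :> 'Z_(m.+2) by ring.
  by rewrite unitrN unit_Zp_int.
- have -> : (-1) ^+ false + ((2 * s)%N%:R - (2 * t)%N%:R) =
            (2 * (s%:Z - t%:Z) + 1)%:~R :> 'Z_(m.+2) by ring.
  exact: unit_Zp_int.
Qed.

End EvenModulus.

Theorem mainTheorem19 (n : nat) (S : {set 'Z_n}) :
  (2 < n)%N ->
  (0 : 'Z_n) \notin S ->
  (forall x : 'Z_n, x \in S -> - x \in S) ->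
  ((  (* (a) *)
      (~~ odd n /\ ((n./2)%:R : 'Z_n) \in S /\
       exists s t : nat,
         #|[set x in S | (x != (n./2)%:R) && ~~ odd (val x)]| = (2 * s)%N /\
         #|[set x in S | (x != (n./2)%:R) && odd (val x)]| = (2 * t)%N /\
         coprime `|(2 * (s%:Z - t%:Z) + 1)%R|%N n /\
         coprime `|(2 * (t%:Z - s%:Z) + 1)%R|%N n)
    \/ (* (b) *) coprime #|S| n) ->
   Zn_distance_antimagic n (Cay S))
  /\
  (~~ odd #|S| -> ~~ odd n -> ~ Zn_distance_antimagic n (Cay S)).
Proof.
case: n S => [|[|m]] // S _ _ _.
have even_m : ~~ odd m.+2 -> ~~ odd m by rewrite /= negbK.
split.
- case=> [[/even_m m_even [hS [s [t [cE [cO [c1 c2]]]]]]] | coS].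
  + apply: (signed_label_antimagic m_even).
    exact: sign_sum_unit hS cE cO c1 c2.
  + exact: antimagic_of_coprime.
- by move=> S_even /even_m m_even; apply: not_antimagic_even.
Qed.
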